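(* In the setting of the context, let $(h_1,h_2)\in\mathbb C(s)^2$ satisfy $\widetilde\gamma_1h_1+\widetilde\gamma_2h_2+\omega=0$, $h_1^{\iota_1}=h_1$, $h_2^{\iota_2}=h_2$. Let $P$ be a pole of $h_1$ distinct from $0,\infty$. (i) If $P\notin\mathcal L_1^-$, then $\sigma^{-1}P$ is a pole of $h_1$. (ii) If $P\notin\mathcal L_1^+$, then $\sigma P$ is a pole of $h_1$. Let $P$ be a pole of $h_2$ distinct from $0,\infty$. (i') If $P\notin\mathcal L_2^-$, then $\sigma^{-1}P$ is a pole of $h_2$. (ii') If $P\notin\mathcal L_2^+$, then $\sigma P$ is a pole of $h_2$.
   Context: For a genus-zero weighted quadrant walk model (step set one of the five genus-zero sets, step weights $d_{i,j}>0$, Boltzmann weights $a,b>0$), $A=1-1/a$, $B=1-1/b$, $\omega=1-A-B$ (a constant). $s\mapsto(x(s),y(s))$ is a fixed rational parametrization by $\mathbb P^1$ of the kernel curve (for a fixed real $t$ transcendental over $\mathbb Q((d_{i,j}),a,b)$), with $x(1/s)=x(s)$, $y(q/s)=y(s)$ for a fixed real $q$ not a root of unity; $\iota_1(s)=1/s$, $\iota_2(s)=q/s$, $\sigma(s)=qs$, $h^\tau=h\circ\tau$. $\widetilde\gamma_1=A/x(s)-td_{1,-1}/y(s)$ and $\widetilde\gamma_2=B/y(s)-td_{-1,1}/x(s)$ have divisors $(\widetilde\gamma_1)=P_1+P_2-0-\infty$ and $(\widetilde\gamma_2)=P_3+P_4-0-\infty$ with $P_i\notin\{0,\infty\}$ (a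 fixed labelling). Define $\mathcal L_1^-=\{P_1,P_2,\iota_2P_3,\iota_2P_4\}$, $\mathcal L_1^+=\{\iota_1P_1,\iota_1P_2,\sigma^{-1}P_3,\sigma^{-1}P_4\}$, $\mathcal L_2^-=\{\sigma P_1,\sigma P_2,\iota_2P_3,\iota_2P_4\}$, $\mathcal L_2^+=\{\iota_1P_1,\iota_1P_2,P_3,P_4\}$. *)

From HB Require Import structures.
From mathcomp Require Import all_boot all_order all_algebra.
From mathcomp Require Import complex.
From mathcomp Require Import reals.
Set Implicit Arguments. Unset Strict Implicit. Unset Printing Implicit Defensive.
Import Order.TTheory GRing.Theory Num.Theory.
Local Open Scope ring_scope.

Section RatFun.
Variable R : realType.
Local Notation C := (R[i]).

Definition rfun := ({poly C} * {poly C})%type.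
Definition rf_valid (f : rfun) : bool := f.2 != 0.
Definition rf_eq (f g : rfun) : Prop := f.1 * g.2 = g.1 * f.2.
Definition rf_const (c : C) : rfun := (c%:P, 1).
Definition rf_add (f g : rfun) : rfun := (f.1 * g.2 + g.1 * f.2, f.2 * g.2).
Definition rf_mul (f g : rfun) : rfun := (f.1 * g.1, f.2 * g.2).
Definition rf_inv (f : rfun) : rfun := (f.2, f.1).

(* s^(N-1) * p(c/s), for size p <= N *)
Definition poly_recip (c : C) (N : nat) (p : {poly C}) : {poly C} :=
  \poly_(i < N) (p`_(N.-1 - i) * c ^+ (N.-1 - i)).
(* h(c/s), i.e. h composed with s |-> c/s *)
Definition rf_comp_inv (c : C) (f : rfun) : rfun :=
  let N := maxn (size f.1) (size f.2) in (poly_recip c N f.1, poly_recip c N f.2).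

(* ---- points of P^1(C): Some z = z, None = infinity ---- *)
Definition pt := option C.
Definition pt0 : pt := Some 0.
Definition ptinf : pt := None.

Definition rf_ord (f : rfun) (P : pt) : int :=
  match P with
  | Some z => (mup z f.1)%:Z - (mup z f.2)%:Z
  | None => (size f.2)%:Z - (size f.1)%:Z
  end.
Definition rf_pole (f : rfun) (P : pt) : bool := (f.1 != 0) && (rf_ord f P < 0).

Definition has_divisor (f : rfun) (D : pt -> int) : Prop :=
  f.1 != 0 /\ forall P, rf_ord f P = D P.
Definition pt_ind (Q P : pt) : int := (Q == P)%:Z.

Definition pt_inv (c : C) (P : pt) : pt :=
  match P with
  | Some z => if z == 0 then None else Some (c / z)
  | None => Some 0
  end.
Definition pt_mul (c : C) (P : pt) : pt :=
  match P with Some z => Some (c * z) | None => None end.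

Definition subfield_pred (S : R -> Prop) : Prop :=
  S 1 /\ (forall u v, S u -> S v -> S (u - v)) /\
  (forall u v, S u -> S v -> S (u * v)) /\ (forall u, S u -> S u^-1).
Definition in_gen_field (d : 'I_3 -> 'I_3 -> R) (a b z : R) : Prop :=
  forall S : R -> Prop, subfield_pred S -> (forall i j, S (d i j)) -> S a -> S b -> S z.
Definition transcendental_over (d : 'I_3 -> 'I_3 -> R) (a b t : R) : Prop :=
  forall p : {poly R}, p != 0 -> (forall k, in_gen_field d a b p`_k) -> p.[t] != 0.

(* ---- kernel curve: K(X,Y) = XY(1 - t sum_{i,j} d_{i,j} X^i Y^j), with
   d i j standing for d_{i-1,j-1}.  For x = xn/xd, y = yn/yd we test
   xd^2 yd^2 K(x,y) = 0 as a polynomial identity. ---- *)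
Definition kernel_at (d : 'I_3 -> 'I_3 -> R) (t : R) (x y : rfun) : {poly C} :=
  x.1 * y.1 * x.2 * y.2
  - (t%:C)%C%:P * \sum_(i < 3) \sum_(j < 3)
      ((d i j)%:C)%C%:P * x.1 ^+ i * x.2 ^+ (2 - i) * y.1 ^+ j * y.2 ^+ (2 - j).

End RatFun.

(* At a point of C^* other than its zeros P1, P2, gamma1 is a unit and gamma2 is
   regular, so gamma1 h1 = -(gamma2 h2 + omega) shows that a pole of h1 there is a
   pole of h2; symmetrically, off P3, P4 a pole of h2 is a pole of h1.  Together
   with the invariances h1 o iota1 = h1 and h2 o iota2 = h2, a pole P of h1 travels
   along P -> iota2 P -> iota1 iota2 P = sigma^-1 P, or along
   P -> iota1 P -> iota2 iota1 P = sigma P, and the sets L collect exactly the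
   points at which one of these transfers could fail.  Poles are handled through
   regularity (having a representative whose denominator does not vanish), which
   is stable under sums, products, equality in C(s) and s |-> c/s. *)

From HB Require Import structures.
From mathcomp Require Import all_boot all_order all_algebra.
From mathcomp Require Import complex reals.
From mathcomp Require Import zify ring.
Set Implicit Arguments. Unset Strict Implicit.
Import Order.TTheory GRing.Theory Num.Theory.
Local Open Scope ring_scope.

Lemma poly_eq_nonzero (F : numFieldType) (p q : {poly F}) :
  (forall s, s != 0 -> p.[s] = q.[s]) -> p = q.
Proof.
move=> pq; apply/eqP; rewrite -subr_eq0; apply/eqP.
apply: (@roots_geq_poly_eq0 _ _ [seq i.+1%:R | i <- iota 0 (size (p - q))]).
- apply/allP => _ /mapP[i _ ->].
  by rewrite /root hornerD hornerN pq ?subrr ?pnatr_eq0.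
- by rewrite map_inj_uniq ?iota_uniq // => i j /eqP; rewrite eqr_nat => /eqP[].
- by rewrite size_map size_iota.
Qed.

Section RationalFunctions.
Variable R : realType.
Local Notation C := R[i].
Local Notation rfun := (rfun R).
Implicit Types (f g k : rfun) (c z : C).

Lemma horner_poly_recip c N (p : {poly C}) s :
  (size p <= N)%N -> s != 0 -> (poly_recip c N p).[s] = s ^+ N.-1 * p.[c / s].
Proof.
move=> le_pN s0; rewrite /poly_recip horner_poly (horner_coef_wide _ le_pN).
rewrite mulr_sumr (reindex_inj rev_ord_inj) /=; apply: eq_bigr => i _.
have iN := ltn_ord i.
have -> : (N.-1 - (N - i.+1) = i)%N by lia.
have -> : (N.-1 = (N - i.+1) + i)%N by lia.
by rewrite exprD expr_div_n; field; rewrite expf_neq0.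
Qed.

Lemma horner_comp_inv c f s : s != 0 ->
  let N := maxn (size f.1) (size f.2) in
  (rf_comp_inv c f).1.[s] = s ^+ N.-1 * f.1.[c / s] /\
  (rf_comp_inv c f).2.[s] = s ^+ N.-1 * f.2.[c / s].
Proof. by move=> s0; rewrite !horner_poly_recip ?leq_maxl ?leq_maxr. Qed.

Lemma rf_valid_comp_inv c f : c != 0 -> rf_valid f -> rf_valid (rf_comp_inv c f).
Proof.
move=> c0 f2; apply: contra f2 => /eqP f2'; apply/eqP/poly_eq_nonzero => w w0.
have cw0 : c / w != 0 by rewrite mulf_neq0 ?invr_eq0.
have [_] := horner_comp_inv c f cw0; rewrite f2' horner0 => /esym/eqP.
rewrite mulf_eq0 expf_eq0 (negbTE cw0) andbF /= invf_div mulrC divfK //.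
by rewrite horner0; move/eqP.
Qed.

Lemma rf_eq_comp_inv c f g : rf_eq f g -> rf_eq (rf_comp_inv c f) (rf_comp_inv c g).
Proof.
move=> fg; apply: poly_eq_nonzero => s s0; rewrite !hornerM.
have [-> ->] := horner_comp_inv c f s0; have [-> ->] := horner_comp_inv c g s0.
rewrite mulrACA [RHS]mulrACA -!hornerM fg; congr (_ * _); exact: mulrC.
Qed.

Definition rf_regular z f : Prop := exists2 g : rfun, rf_eq f g & g.2.[z] != 0.

Lemma rf_regularP z f : rf_valid f -> reflect (rf_regular z f) (~~ rf_pole f (Some z)).
Proof.
rewrite /rf_valid => f2; rewrite /rf_pole /rf_ord negb_and negbK -leNgt subr_ge0 lez_nat.
apply: (iffP idP) => [|[[n d] /= fnd dz]]; last first.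
  have [-> //|f1] := eqVneq f.1 0.
  have d0 : d != 0 by apply: contraNneq dz => ->; rewrite horner0 eqxx.
  have n0 : n != 0.
    apply: contra_neq f1 => n0; apply/eqP.
    by move/eqP: fnd; rewrite n0 mul0r mulf_eq0 (negbTE d0) orbF.
  have := congr1 (mup z) fnd.
  by rewrite mupMl // mupM // => ->; rewrite leq_addl orbT.
have [f10 _|f1 /= le_mup] := eqVneq f.1 0.
  by exists (0, 1); rewrite /rf_eq /= ?f10 ?mul0r ?mulr1 ?hornerC ?oner_eq0.
have [m [v]] := multiplicity_XsubC f.1 z; rewrite f1 /= => vz f1E.
have [k [u]] := multiplicity_XsubC f.2 z; rewrite f2 /= => uz f2E.
have v0 : v != 0 by apply: contraNneq vz => ->; rewrite root0.
have u0 : u != 0 by apply: contraNneq uz => ->; rewrite root0.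
move: le_mup; rewrite f1E f2E !mupMr // !mup_XsubCX eqxx => le_km.
exists (v * ('X - z%:P) ^+ (m - k), u) => //=.
by rewrite /rf_eq /= f1E f2E -{1}(subnK le_km) exprD; ring.
Qed.

Lemma rf_regular_eq z f g : rf_valid f -> rf_eq f g -> rf_regular z f -> rf_regular z g.
Proof.
move=> f2 fg [k fk kz]; exists k => //; apply: (mulIf f2).
have -> : g.1 * k.2 * f.2 = (g.1 * f.2) * k.2 by ring.
by rewrite -fg -[f.1 * g.2 * k.2]mulrAC fk; ring.
Qed.

Lemma rf_regular_const z c : rf_regular z (rf_const c).
Proof. by exists (rf_const c); rewrite // hornerC oner_eq0. Qed.

Lemma rf_regular_add z f g : rf_regular z f -> rf_regular z g -> rf_regular z (rf_add f g).
Proof.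
move=> [k fk kz] [k' gk k'z]; exists (rf_add k k'); last by rewrite hornerM mulf_neq0.
rewrite /rf_eq /= in fk gk *.
have -> : (f.1 * g.2 + g.1 * f.2) * (k.2 * k'.2)
        = (f.1 * k.2) * (g.2 * k'.2) + (g.1 * k'.2) * (f.2 * k.2) by ring.
by rewrite fk gk; ring.
Qed.

Lemma rf_regular_mul z f g : rf_regular z f -> rf_regular z g -> rf_regular z (rf_mul f g).
Proof.
move=> [k fk kz] [k' gk k'z]; exists (rf_mul k k'); last by rewrite hornerM mulf_neq0.
rewrite /rf_eq /= in fk gk *.
have -> : f.1 * g.1 * (k.2 * k'.2) = (f.1 * k.2) * (g.1 * k'.2) by ring.
by rewrite fk gk; ring.
Qed.

Lemma rf_regular_comp_inv c f z : z != 0 -> rf_regular (c / z) f -> rf_regular z (rf_comp_inv c f).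
Proof.
move=> z0 [k fk kz]; exists (rf_comp_inv c k); first exact: rf_eq_comp_inv.
by have [_ ->] := horner_comp_inv c k z0; rewrite mulf_neq0 // expf_neq0.
Qed.

Definition pt_Cstar (P : pt R) : bool := (P != pt0 R) && (P != ptinf R).

Lemma pt_invK c : c != 0 -> involutive (pt_inv c).
Proof.
move=> c0 [z|] /=; last by rewrite eqxx.
have [-> //|z0] := eqVneq z 0; rewrite /= mulf_eq0 invr_eq0 (negbTE c0) (negbTE z0).
by rewrite invf_div mulrC divfK.
Qed.

Lemma pt_inv_Cstar c P : c != 0 -> pt_Cstar (pt_inv c P) = pt_Cstar P.
Proof.
rewrite /pt_Cstar /pt0 /ptinf => c0; case: P => [z|] /=; last by rewrite eqxx.
have [->|z0] := eqVneq z 0; first by rewrite !eqxx andbF.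
by rewrite !(inj_eq Some_inj) mulf_eq0 invr_eq0 (negbTE c0) (negbTE z0).
Qed.

Lemma pt_inv_comp c c' P : c' != 0 -> pt_inv c (pt_inv c' P) = pt_mul (c / c') P.
Proof.
move=> c'0; case: P => [z|] /=; last by rewrite eqxx.
have [->|z0] := eqVneq z 0; first by rewrite mulr0.
rewrite /= mulf_eq0 invr_eq0 (negbTE c'0) (negbTE z0).
by rewrite invf_div mulrA mulrAC.
Qed.

Lemma pt_mulK c : c != 0 -> cancel (pt_mul c) (pt_mul c^-1).
Proof. by move=> c0 [z|] //=; rewrite mulrA mulVf ?mul1r. Qed.

Lemma pt_mulKV c : c != 0 -> cancel (pt_mul c^-1) (pt_mul c).
Proof. by move=> c0 [z|] //=; rewrite mulrA mulfV ?mul1r. Qed.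

Lemma rf_pole_pt_inv c f P : c != 0 -> rf_valid f -> rf_eq (rf_comp_inv c f) f ->
  pt_Cstar P -> rf_pole f P -> rf_pole f (pt_inv c P).
Proof.
move=> c0 f2 fsym; case: P => [z|]; last by rewrite /pt_Cstar /ptinf eqxx andbF.
case/andP; rewrite /pt0 (inj_eq Some_inj) => z0 _ /=.
rewrite (negbTE z0) => pz; apply: contraT => /(rf_regularP _ f2) fcz.
have := rf_regular_eq (rf_valid_comp_inv c0 f2) fsym (rf_regular_comp_inv z0 fcz).
by move/(rf_regularP _ f2); rewrite pz.
Qed.

Lemma rf_eq_const0 f : rf_eq f (rf_const 0) = (f.1 = 0).
Proof. by rewrite /rf_eq /= polyC0 mul0r mulr1. Qed.

Definition div_two_zeros (P1 P2 : pt R) : pt R -> int :=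
  fun P => pt_ind P1 P + pt_ind P2 P - pt_ind (pt0 R) P - pt_ind (ptinf R) P.

Lemma has_div_two_zeros_ord g P1 P2 P : has_divisor g (div_two_zeros P1 P2) ->
  pt_Cstar P -> rf_ord g P = pt_ind P1 P + pt_ind P2 P.
Proof.
case=> _ ->; case/andP => P0 Pinf.
by rewrite /div_two_zeros /pt_ind ![_ == P]eq_sym (negbTE P0) (negbTE Pinf) !subr0.
Qed.

Lemma rf_ord_inv f P : rf_ord (rf_inv f) P = - rf_ord f P.
Proof. by case: P => *; rewrite /= opprB. Qed.

Lemma rf_pole_transfer g1 g2 h1 h2 omega P :
  g1.1 != 0 -> rf_valid g1 -> rf_valid g2 -> rf_valid h1 -> rf_valid h2 ->
  rf_eq (rf_add (rf_add (rf_mul g1 h1) (rf_mul g2 h2)) (rf_const omega)) (rf_const 0) ->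
  P != ptinf R -> rf_ord g1 P = 0 -> 0 <= rf_ord g2 P -> rf_pole h1 P -> rf_pole h2 P.
Proof.
rewrite rf_eq_const0 => g11 g12 g22 h12 h22 hsum.
case: P => [w|] // _ g1w g2w; apply: contraTT => /(rf_regularP _ h22) h2w.
have g2reg : rf_regular w g2 by apply/rf_regularP; rewrite // /rf_pole ltNge g2w andbF.
have g1inv : rf_regular w (rf_inv g1).
  by apply/rf_regularP; rewrite // /rf_pole rf_ord_inv g1w oppr0 ltxx andbF.
have g1h1 : rf_regular w (rf_mul g1 h1).
  have := rf_regular_mul (rf_regular_const w (-1))
            (rf_regular_add (rf_regular_mul g2reg h2w) (rf_regular_const w omega)).
  apply: rf_regular_eq; first by rewrite /rf_valid /= mul1r mulr1 mulf_neq0.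
  rewrite /rf_eq /= polyCN polyC1; apply: subr0_eq; rewrite -[RHS]oppr0 -hsum /=; ring.
apply/(rf_regularP _ h12); apply: rf_regular_eq (rf_regular_mul g1inv g1h1).
  by rewrite /rf_valid /= !mulf_neq0.
by rewrite /rf_eq /=; ring.
Qed.

Lemma rf_pole_transfer_off_zeros g1 g2 h1 h2 omega P1 P2 P3 P4 P :
  has_divisor g1 (div_two_zeros P1 P2) -> has_divisor g2 (div_two_zeros P3 P4) ->
  rf_valid g1 -> rf_valid g2 -> rf_valid h1 -> rf_valid h2 ->
  rf_eq (rf_add (rf_add (rf_mul g1 h1) (rf_mul g2 h2)) (rf_const omega)) (rf_const 0) ->
  pt_Cstar P -> P != P1 -> P != P2 -> rf_pole h1 P -> rf_pole h2 P.
Proof.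
move=> g1_div g2_div g1_valid g2_valid h1_valid h2_valid h_sum PC nP1 nP2.
have /andP[_ Pinf] := PC.
apply: (rf_pole_transfer (proj1 g1_div) _ _ _ _ h_sum Pinf) => //.
  by rewrite (has_div_two_zeros_ord g1_div PC) /pt_ind !(eq_sym _ P) (negbTE nP1) (negbTE nP2).
by rewrite (has_div_two_zeros_ord g2_div PC) addr_ge0.
Qed.

End RationalFunctions.

Section PoleOrbits.
Variables (R : realType) (q omega : R[i]) (g1 g2 h1 h2 : rfun R) (P1 P2 P3 P4 : pt R).
Hypotheses (q0 : q != 0) (g1_valid : rf_valid g1) (g2_valid : rf_valid g2).
Hypotheses (h1_valid : rf_valid h1) (h2_valid : rf_valid h2).
Hypotheses (g1_div : has_divisor g1 (div_two_zeros P1 P2)).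
Hypotheses (g2_div : has_divisor g2 (div_two_zeros P3 P4)).
Hypothesis h_sum :
  rf_eq (rf_add (rf_add (rf_mul g1 h1) (rf_mul g2 h2)) (rf_const omega)) (rf_const 0).
Hypotheses (h1_sym : rf_eq (rf_comp_inv 1 h1) h1) (h2_sym : rf_eq (rf_comp_inv q h2) h2).

Let pt_inv1_eq := can2_eq (pt_invK (oner_neq0 R[i])) (pt_invK (oner_neq0 R[i])).
Let pt_invq_eq := can2_eq (pt_invK q0) (pt_invK q0).
Let pt_mulq_eq := can2_eq (pt_mulK q0) (pt_mulKV q0).
Let pt_mulVq_eq := can2_eq (pt_mulKV q0) (pt_mulK q0).

Let pt_mulq_inv P : pt_inv q (pt_inv 1 P) = pt_mul q P.
Proof. by rewrite pt_inv_comp ?oner_neq0 ?divr1. Qed.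

Let pt_mulVq_inv P : pt_inv 1 (pt_inv q P) = pt_mul q^-1 P.
Proof. by rewrite pt_inv_comp ?div1r. Qed.

Let h1_pole_inv P : pt_Cstar P -> rf_pole h1 P -> rf_pole h1 (pt_inv 1 P).
Proof. exact: rf_pole_pt_inv (oner_neq0 _) h1_valid h1_sym. Qed.

Let h2_pole_inv P : pt_Cstar P -> rf_pole h2 P -> rf_pole h2 (pt_inv q P).
Proof. exact: rf_pole_pt_inv q0 h2_valid h2_sym. Qed.

Let h1_pole_h2 P : pt_Cstar P -> P != P1 -> P != P2 -> rf_pole h1 P -> rf_pole h2 P.
Proof. exact: rf_pole_transfer_off_zeros g1_div g2_div g1_valid g2_valid h1_valid h2_valid h_sum. Qed.

Let h2_pole_h1 P : pt_Cstar P -> P != P3 -> P != P4 -> rf_pole h2 P -> rf_pole h1 P.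
Proof.
apply: (rf_pole_transfer_off_zeros (omega := omega) g2_div g1_div) => //.
by move: h_sum; rewrite !rf_eq_const0 /= => <-; ring.
Qed.

Let h1_pole_mulV P : rf_pole h1 P -> pt_Cstar P ->
  P \notin [:: P1; P2; pt_inv q P3; pt_inv q P4] -> rf_pole h1 (pt_mul q^-1 P).
Proof.
move=> hP PC; rewrite !inE !negb_or => /and4P[nP1 nP2 nP3 nP4].
have i2PC : pt_Cstar (pt_inv q P) by rewrite pt_inv_Cstar.
have h2_i2P := h2_pole_inv PC (h1_pole_h2 PC nP1 nP2 hP).
have h1_i2P : rf_pole h1 (pt_inv q P) by apply: h2_pole_h1; rewrite ?pt_invq_eq.
by rewrite -pt_mulVq_inv; apply: h1_pole_inv.
Qed.

Let h1_pole_mul P : rf_pole h1 P -> pt_Cstar P ->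
  P \notin [:: pt_inv 1 P1; pt_inv 1 P2; pt_mul q^-1 P3; pt_mul q^-1 P4] ->
  rf_pole h1 (pt_mul q P).
Proof.
move=> hP PC; rewrite !inE !negb_or => /and4P[nP1 nP2 nP3 nP4].
have i1PC : pt_Cstar (pt_inv 1 P) by rewrite pt_inv_Cstar ?oner_neq0.
have sPC : pt_Cstar (pt_mul q P) by rewrite -pt_mulq_inv pt_inv_Cstar.
have h2_i1P : rf_pole h2 (pt_inv 1 P).
  by apply: h1_pole_h2 (h1_pole_inv PC hP); rewrite ?pt_inv1_eq.
have h2_sP : rf_pole h2 (pt_mul q P) by rewrite -pt_mulq_inv; apply: h2_pole_inv.
by apply: h2_pole_h1; rewrite ?pt_mulq_eq.
Qed.

Let h2_pole_mulV P : rf_pole h2 P -> pt_Cstar P ->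
  P \notin [:: pt_mul q P1; pt_mul q P2; pt_inv q P3; pt_inv q P4] ->
  rf_pole h2 (pt_mul q^-1 P).
Proof.
move=> hP PC; rewrite !inE !negb_or => /and4P[nP1 nP2 nP3 nP4].
have i2PC : pt_Cstar (pt_inv q P) by rewrite pt_inv_Cstar.
have sVPC : pt_Cstar (pt_mul q^-1 P) by rewrite -pt_mulVq_inv !pt_inv_Cstar ?oner_neq0.
have h1_i2P : rf_pole h1 (pt_inv q P).
  by apply: h2_pole_h1 (h2_pole_inv PC hP); rewrite ?pt_invq_eq.
have h1_sVP : rf_pole h1 (pt_mul q^-1 P) by rewrite -pt_mulVq_inv; apply: h1_pole_inv.
by apply: h1_pole_h2; rewrite ?pt_mulVq_eq.
Qed.

Let h2_pole_mul P : rf_pole h2 P -> pt_Cstar P ->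
  P \notin [:: pt_inv 1 P1; pt_inv 1 P2; P3; P4] -> rf_pole h2 (pt_mul q P).
Proof.
move=> hP PC; rewrite !inE !negb_or => /and4P[nP1 nP2 nP3 nP4].
have i1PC : pt_Cstar (pt_inv 1 P) by rewrite pt_inv_Cstar ?oner_neq0.
have h1_i1P := h1_pole_inv PC (h2_pole_h1 PC nP3 nP4 hP).
have h2_i1P : rf_pole h2 (pt_inv 1 P) by apply: h1_pole_h2; rewrite ?pt_inv1_eq.
by rewrite -pt_mulq_inv; apply: h2_pole_inv.
Qed.

Lemma pole_orbits :
  (forall P, rf_pole h1 P -> P != pt0 R -> P != ptinf R ->
     (P \notin [:: P1; P2; pt_inv q P3; pt_inv q P4] -> rf_pole h1 (pt_mul q^-1 P)) /\
     (P \notin [:: pt_inv 1 P1; pt_inv 1 P2; pt_mul q^-1 P3; pt_mul q^-1 P4] ->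
        rf_pole h1 (pt_mul q P))) /\
  (forall P, rf_pole h2 P -> P != pt0 R -> P != ptinf R ->
     (P \notin [:: pt_mul q P1; pt_mul q P2; pt_inv q P3; pt_inv q P4] ->
        rf_pole h2 (pt_mul q^-1 P)) /\
     (P \notin [:: pt_inv 1 P1; pt_inv 1 P2; P3; P4] -> rf_pole h2 (pt_mul q P))).
Proof.
split=> P hP P0 Pinf; have PC : pt_Cstar P by apply/andP.
  by split; [apply: h1_pole_mulV | apply: h1_pole_mul].
by split; [apply: h2_pole_mulV | apply: h2_pole_mul].
Qed.

End PoleOrbits.

Unset Implicit Arguments.

Theorem lemma3p6 (R : realType)
  (* weighted small-step model: d i j = d_{i-1,j-1} >= 0, step set = support of d *)
  (d : 'I_3 -> 'I_3 -> R) (a b t q : R)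
  (x y h1 h2 : rfun R) (P1 P2 P3 P4 : pt R) :
  (forall i j, 0 <= d i j) -> d (inord 1) (inord 1) = 0 ->
  0 < a -> 0 < b ->
  transcendental_over d a b t ->
  (* q real, nonzero, not a root of unity *)
  q != 0 -> (forall n : nat, (0 < n)%N -> q ^+ n != 1) ->
  (* rational parametrization of the kernel curve *)
  rf_valid x -> rf_valid y ->
  (forall c : R[i], ~ rf_eq x (rf_const c)) -> (forall c : R[i], ~ rf_eq y (rf_const c)) ->
  kernel_at d t x y = 0 ->
  rf_eq (rf_comp_inv 1 x) x -> rf_eq (rf_comp_inv (q%:C)%C y) y ->
  let A := 1 - a^-1 in let B := 1 - b^-1 in let omega := 1 - A - B in
  let g1 := rf_add (rf_mul (rf_const (A%:C)%C) (rf_inv x))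
                   (rf_mul (rf_const (- (t * d (inord 2) (inord 0)))%:C)%C (rf_inv y)) in
  let g2 := rf_add (rf_mul (rf_const (B%:C)%C) (rf_inv y))
                   (rf_mul (rf_const (- (t * d (inord 0) (inord 2)))%:C)%C (rf_inv x)) in
  has_divisor g1 (fun P => pt_ind P1 P + pt_ind P2 P - pt_ind (pt0 R) P - pt_ind (ptinf R) P) ->
  has_divisor g2 (fun P => pt_ind P3 P + pt_ind P4 P - pt_ind (pt0 R) P - pt_ind (ptinf R) P) ->
  (forall i, i \in [:: P1; P2; P3; P4] -> i != pt0 R /\ i != ptinf R) ->
  (* hypotheses on (h1, h2) in C(s)^2 *)
  rf_valid h1 -> rf_valid h2 ->
  rf_eq (rf_add (rf_add (rf_mul g1 h1) (rf_mul g2 h2)) (rf_const (omega%:C)%C)) (rf_const 0) ->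
  rf_eq (rf_comp_inv 1 h1) h1 -> rf_eq (rf_comp_inv (q%:C)%C h2) h2 ->
  let i2 := pt_inv (q%:C)%C in
  let sig := pt_mul (q%:C)%C in
  let sigi := pt_mul (q^-1)%:C%C in
  let L1m := [:: P1; P2; i2 P3; i2 P4] in
  let L1p := [:: pt_inv 1 P1; pt_inv 1 P2; sigi P3; sigi P4] in
  let L2m := [:: sig P1; sig P2; i2 P3; i2 P4] in
  let L2p := [:: pt_inv 1 P1; pt_inv 1 P2; P3; P4] in
  (forall P, rf_pole h1 P -> P != pt0 R -> P != ptinf R ->
     (P \notin L1m -> rf_pole h1 (sigi P)) /\ (P \notin L1p -> rf_pole h1 (sig P))) /\
  (forall P, rf_pole h2 P -> P != pt0 R -> P != ptinf R ->
     (P \notin L2m -> rf_pole h2 (sigi P)) /\ (P \notin L2p -> rf_pole h2 (sig P))).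
Proof.
move=> _ _ _ _ _ q0 _ _ _ x_ncst y_ncst _ _ _ A B omega g1 g2 g1_div g2_div _
  h1_valid h2_valid h_sum h1_sym h2_sym i2 sig sigi L1m L1p L2m L2p.
have qC0 : (q%:C)%C != 0 by rewrite fmorph_eq0.
have [x1 y1] : x.1 != 0 /\ y.1 != 0.
  by split; apply/eqP; rewrite -rf_eq_const0; [apply: x_ncst | apply: y_ncst].
have g1_valid : rf_valid g1 by rewrite /rf_valid /= !mul1r mulf_neq0.
have g2_valid : rf_valid g2 by rewrite /rf_valid /= !mul1r mulf_neq0.
rewrite /L1m /L1p /L2m /L2p /sigi fmorphV.
exact: pole_orbits qC0 g1_valid g2_valid h1_valid h2_valid g1_div g2_div h_sum h1_sym h2_sym.
Qed.
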